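(* Let $\varphi:[0,\infty)\to\mathbb R$ be completely monotone with $\varphi(0)=1$ and $\lim_{x\to\infty}\varphi(x)=0$, and let $0<p\le1$, $D\ge1$. Then the function $\rho:\mathbb R^D\to\mathbb R$, $\rho(\boldsymbol\omega)=\varphi(\|\boldsymbol\omega\|_p^p)$, is positive definite: for every $k\ge1$, every pairwise distinct $\theta_1,\dots,\theta_k\in\mathbb R^D$ and every $\mathbf c\in\mathbb C^k\setminus\{0\}$, $\sum_{\ell,\ell'=1}^k\overline{\mathbf c[\ell]}\,\mathbf c[\ell']\,\varphi(\|\theta_{\ell'}-\theta_\ell\|_p^p)>0$.
   Context: A function $\varphi:[0,\infty)\to\mathbb R$ is completely monotone (CMF) if it is infinitely differentiable on $(0,\infty)$, right-continuous at $0$, and $(-1)^n\varphi^{(n)}(x)\ge0$ for all $x>0$ and all integers $n\ge0$. $\|\theta\|_p^p=\sum_{d=1}^D|\theta[d]|^p$. *)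

From Stdlib Require Import Reals Lra.
Open Scope R_scope.

(* Completely monotone function phi : [0,oo) -> R (values at x<0 are irrelevant).
   f n is the n-th derivative of phi on (0,oo). *)
Definition CMF (phi : R -> R) : Prop :=
  (exists f : nat -> R -> R,
      (forall x, 0 < x -> f 0%nat x = phi x) /\
      (forall n x, 0 < x -> derivable_pt_lim (f n) x (f (S n) x)) /\
      (forall n x, 0 < x -> 0 <= (-1) ^ n * f n x)) /\
  (forall eps, 0 < eps -> exists delta, 0 < delta /\
      forall x, 0 <= x < delta -> Rabs (phi x - phi 0) < eps).

Fixpoint sumR (n : nat) (f : nat -> R) : R :=
  match n with
  | O => 0
  | S m => sumR m f + f m
  end.

(* |x|^p with the convention 0^p = 0 (p > 0) *)
Definition abspow (x p : R) : R :=
  if Req_EM_T x 0 then 0 else Rpower (Rabs x) p.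

(* vectors of R^D are functions nat -> R, coordinates 0..D-1 *)
Definition pnormp (p : R) (D : nat) (v : nat -> R) : R :=
  sumR D (fun d => abspow (v d) p).

Definition vsub (u v : nat -> R) : nat -> R := fun d => u d - v d.

Record Cplx := mkC { re : R; im : R }.
Definition Cadd (z w : Cplx) := mkC (re z + re w) (im z + im w).
Definition Cmul (z w : Cplx) :=
  mkC (re z * re w - im z * im w) (re z * im w + im z * re w).
Definition Cconj (z : Cplx) := mkC (re z) (- im z).
Definition Cofreal (x : R) := mkC x 0.
Definition C0 := mkC 0 0.
Fixpoint sumC (n : nat) (f : nat -> Cplx) : Cplx :=
  match n with
  | O => C0
  | S m => Cadd (sumC m f) (f m)
  end.

(* z > 0 in C: z is real and positive *)
Definition Cpos (z : Cplx) : Prop := im z = 0 /\ 0 < re z.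

(* A completely monotone [phi] is the sum, on [[0, a]], of its Taylor series
   at [a]: [phi x = sum_m b_m (a - x) ^ m] with [b_m >= 0], and in fact
   [b_m > 0] since [phi 0 = 1] and [phi -> 0] forbid [phi] from being a
   polynomial.  Take [a] above every distance [d_ll' = |theta_l' - theta_l|_p^p];
   then [phi (d_ll')] is a nonnegative combination of entrywise powers of
   [a - d_ll'], so by the Schur product theorem it suffices that [a - d] is a
   limit of Gram matrices.  Coordinatewise, [t |-> L ^ p - t ^ p] has the same
   kind of expansion in powers of [L - t] (here [0 < p <= 1] is used), and
   [L - |s - t| = min (s + B) (t + B) + min (L - B - s) (L - B - t)] is a Gram
   kernel.  Strictness: [((a - d) / a) ^ m] tends to the identity matrix because
   [d > 0] off the diagonal, so some term of the expansion is positive. *)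

From Stdlib Require Import Reals Lra Lia List Factorial.
Open Scope R_scope.

Lemma sumR_ext n f g : (forall i, (i < n)%nat -> f i = g i) -> sumR n f = sumR n g.
Proof.
  induction n as [|n IH]; intros H; simpl; [reflexivity|].
  rewrite IH, H; [reflexivity | lia | intros; apply H; lia].
Qed.

Lemma sumR_add n f g : sumR n (fun i => f i + g i) = sumR n f + sumR n g.
Proof. induction n as [|n IH]; simpl; [lra | rewrite IH; lra]. Qed.

Lemma sumR_scal n c f : sumR n (fun i => c * f i) = c * sumR n f.
Proof. induction n as [|n IH]; simpl; [lra | rewrite IH; lra]. Qed.

Lemma sumR_opp n f : sumR n (fun i => - f i) = - sumR n f.
Proof. induction n as [|n IH]; simpl; [lra | rewrite IH; lra]. Qed.

Lemma sumR_0 n : sumR n (fun _ => 0) = 0.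
Proof. induction n as [|n IH]; simpl; [lra | rewrite IH; lra]. Qed.

Lemma sumR_le n f g : (forall i, (i < n)%nat -> f i <= g i) -> sumR n f <= sumR n g.
Proof.
  induction n as [|n IH]; intros H; simpl; [lra|].
  assert (sumR n f <= sumR n g) by (apply IH; intros; apply H; lia).
  assert (f n <= g n) by (apply H; lia). lra.
Qed.

Lemma sumR_nonneg n f : (forall i, (i < n)%nat -> 0 <= f i) -> 0 <= sumR n f.
Proof. intros H. rewrite <- (sumR_0 n). now apply sumR_le. Qed.

Lemma sumR_term_le n f i :
  (forall j, (j < n)%nat -> 0 <= f j) -> (i < n)%nat -> f i <= sumR n f.
Proof.
  induction n as [|n IH]; intros H Hi; simpl; [lia|].
  assert (0 <= sumR n f) by (apply sumR_nonneg; intros; apply H; lia).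
  destruct (Nat.eq_dec i n) as [->|Hne]; [lra|].
  assert (f i <= sumR n f) by (apply IH; intros; [apply H|]; lia).
  assert (0 <= f n) by (apply H; lia). lra.
Qed.

Lemma sumR_pos n f i :
  (forall j, (j < n)%nat -> 0 <= f j) -> (i < n)%nat -> 0 < f i -> 0 < sumR n f.
Proof. intros H Hi Hf. pose proof (sumR_term_le n f i H Hi). lra. Qed.

Lemma sumR_swap n m (f : nat -> nat -> R) :
  sumR n (fun i => sumR m (fun j => f i j)) = sumR m (fun j => sumR n (fun i => f i j)).
Proof.
  induction n as [|n IH]; simpl; [now rewrite sumR_0|].
  rewrite IH, <- sumR_add. reflexivity.
Qed.

Lemma sumR_delta n i (g : nat -> R) :
  (i < n)%nat -> sumR n (fun j => if Nat.eq_dec i j then g j else 0) = g i.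
Proof.
  induction n as [|n IH]; intros Hi; simpl; [lia|].
  destruct (Nat.eq_dec i n) as [->|Hne].
  - rewrite (sumR_ext n _ (fun _ => 0)), sumR_0; [lra|].
    intros j Hj. destruct (Nat.eq_dec n j); [lia | reflexivity].
  - rewrite IH by lia. lra.
Qed.

Lemma Un_cv_const c : Un_cv (fun _ => c) c.
Proof. intros e He. exists 0%nat. intros. now rewrite R_dist_eq. Qed.

Lemma Un_cv_ext (u v : nat -> R) l : (forall N, u N = v N) -> Un_cv u l -> Un_cv v l.
Proof.
  intros E H e He. destruct (H e He) as [N HN]. exists N. intros. rewrite <- E. auto.
Qed.

Lemma Un_cv_pow (u : nat -> R) l m : Un_cv u l -> Un_cv (fun N => u N ^ m) (l ^ m).
Proof.
  intros H. induction m as [|m IH]; simpl; [apply Un_cv_const | now apply CV_mult].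
Qed.

Lemma Un_cv_sumR n (u : nat -> nat -> R) (l : nat -> R) :
  (forall i, (i < n)%nat -> Un_cv (fun N => u N i) (l i)) ->
  Un_cv (fun N => sumR n (u N)) (sumR n l).
Proof.
  induction n as [|n IH]; intros H; simpl; [apply Un_cv_const|].
  apply CV_plus; [apply IH; intros |]; apply H; lia.
Qed.

Lemma Un_cv_nonneg (u : nat -> R) l : (forall N, 0 <= u N) -> Un_cv u l -> 0 <= l.
Proof. intros H Hu. exact (Rle_cv_lim H (Un_cv_const 0) Hu). Qed.

Lemma series_term_le (u : nat -> R) l K :
  (forall m, 0 <= u m) -> Un_cv (fun M => sumR M u) l -> u K <= l.
Proof.
  intros Hu Hl.
  apply (Rle_cv_lim (Un := fun _ => u K) (Vn := fun M => sumR (M + S K) u)).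
  - intros M. apply sumR_term_le; [intros; apply Hu | lia].
  - apply Un_cv_const.
  - exact (CV_shift' (fun M => sumR M u) (S K) l Hl).
Qed.

Lemma Un_cv_eventually_const (u : nat -> R) l m :
  Un_cv u l -> (forall n, (m <= n)%nat -> u n = u m) -> u m = l.
Proof.
  intros H E. destruct (Req_dec (u m) l) as [|Hne]; [assumption|exfalso].
  destruct (H (Rabs (u m - l))) as [N HN]; [now apply Rabs_pos_lt; lra|].
  specialize (HN (N + m)%nat ltac:(lia)). unfold R_dist in HN.
  rewrite E in HN by lia. lra.
Qed.

Definition qform n (K : nat -> nat -> R) (x : nat -> R) : R :=
  sumR n (fun i => sumR n (fun j => x i * x j * K i j)).

Lemma qform_ext n K1 K2 x :
  (forall i j, (i < n)%nat -> (j < n)%nat -> K1 i j = K2 i j) -> qform n K1 x = qform n K2 x.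
Proof.
  intros H. apply sumR_ext; intros i Hi. apply sumR_ext; intros j Hj. now rewrite H.
Qed.

Lemma qform_scal n c K x : qform n (fun i j => c * K i j) x = c * qform n K x.
Proof.
  unfold qform. rewrite <- sumR_scal. apply sumR_ext; intros i _.
  rewrite <- sumR_scal. apply sumR_ext; intros j _. ring.
Qed.

Lemma qform_sumR n M (K : nat -> nat -> nat -> R) x :
  qform n (fun i j => sumR M (fun m => K m i j)) x = sumR M (fun m => qform n (K m) x).
Proof.
  unfold qform.
  transitivity (sumR n (fun i => sumR M (fun m => sumR n (fun j => x i * x j * K m i j)))).
  - apply sumR_ext; intros i _.
    rewrite (sumR_ext n _ (fun j => sumR M (fun m => x i * x j * K m i j))).
    + apply sumR_swap.
    + intros; now rewrite <- sumR_scal.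
  - apply sumR_swap.
Qed.

Lemma qform_delta n x :
  qform n (fun i j => if Nat.eq_dec i j then 1 else 0) x = sumR n (fun i => x i * x i).
Proof.
  apply sumR_ext; intros i Hi.
  rewrite (sumR_ext n _ (fun j => if Nat.eq_dec i j then x i * x j else 0)).
  - exact (sumR_delta n i (fun j => x i * x j) Hi).
  - intros j _. destruct (Nat.eq_dec i j); ring.
Qed.

Lemma qform_cv n (K : nat -> nat -> nat -> R) (Klim : nat -> nat -> R) x :
  (forall i j, (i < n)%nat -> (j < n)%nat -> Un_cv (fun N => K N i j) (Klim i j)) ->
  Un_cv (fun N => qform n (K N) x) (qform n Klim x).
Proof.
  intros H. apply (Un_cv_sumR n (fun N i => sumR n (fun j => x i * x j * K N i j))).
  intros i Hi. apply (Un_cv_sumR n (fun N j => x i * x j * K N i j)).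
  intros j Hj. apply (CV_mult (fun _ => x i * x j)); [apply Un_cv_const | auto].
Qed.

(* [(K i j / a) ^ m] tends to the identity matrix, whose form is [|x|^2 > 0]. *)
Lemma qform_pow_eventually_pos n (K : nat -> nat -> R) a x :
  0 < a ->
  (forall i, (i < n)%nat -> K i i = a) ->
  (forall i j, (i < n)%nat -> (j < n)%nat -> i <> j -> Rabs (K i j) < a) ->
  (exists i, (i < n)%nat /\ x i <> 0) ->
  exists m, 0 < qform n (fun i j => K i j ^ m) x.
Proof.
  intros Ha Hdiag Hoff [i0 [Hi0 Hx0]].
  set (S := sumR n (fun i => x i * x i)).
  assert (HS : 0 < S).
  { apply (sumR_pos n _ i0); auto; intros; [apply Rle_0_sqr|].
    pose proof (Rsqr_pos_lt _ Hx0). unfold Rsqr in *. lra. }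
  assert (Hcv : Un_cv (fun m => qform n (fun i j => (K i j / a) ^ m) x) S).
  { unfold S. rewrite <- qform_delta. apply (qform_cv n (fun m i j => (K i j / a) ^ m)).
    intros i j Hi Hj. destruct (Nat.eq_dec i j) as [<-|Hij].
    - apply (Un_cv_ext (fun _ => 1)); [|apply Un_cv_const].
      intros m. rewrite Hdiag, Rdiv_diag by (auto; lra). now rewrite pow1.
    - assert (Hr : Rabs (K i j / a) < 1).
      { unfold Rdiv. rewrite Rabs_mult, Rabs_inv, (Rabs_right a) by lra.
        apply (Rmult_lt_reg_r a); [lra|].
        rewrite Rmult_assoc, Rinv_l, Rmult_1_r, Rmult_1_l by lra. auto. }
      intros e He. destruct (pow_lt_1_zero _ Hr e He) as [N HN].
      exists N. intros m Hm. unfold R_dist. rewrite Rminus_0_r. auto. }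
  destruct (Hcv (S / 2)) as [m Hm]; [lra|].
  specialize (Hm m (le_n m)). unfold R_dist in Hm. apply Rabs_def2 in Hm.
  exists m.
  assert (E : qform n (fun i j => (K i j / a) ^ m) x
              = (/ a) ^ m * qform n (fun i j => K i j ^ m) x).
  { rewrite <- qform_scal. apply qform_ext. intros. unfold Rdiv.
    rewrite Rpow_mult_distr. ring. }
  assert (0 < (/ a) ^ m) by (apply pow_lt, Rinv_0_lt_compat, Ha).
  assert (0 < (/ a) ^ m * qform n (fun i j => K i j ^ m) x) by lra.
  nra.
Qed.

Definition lsum (l : list (nat -> R)) (F : (nat -> R) -> R) : R :=
  fold_right (fun v acc => F v + acc) 0 l.

Lemma lsum_app l1 l2 F : lsum (l1 ++ l2) F = lsum l1 F + lsum l2 F.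
Proof. induction l1 as [|v l1 IH]; simpl; [lra | rewrite IH; lra]. Qed.

Lemma lsum_map l g F : lsum (map g l) F = lsum l (fun v => F (g v)).
Proof. induction l as [|v l IH]; simpl; [reflexivity | now rewrite IH]. Qed.

Lemma lsum_ext l F G : (forall v, F v = G v) -> lsum l F = lsum l G.
Proof. intros H. induction l as [|v l IH]; simpl; [reflexivity | now rewrite IH, H]. Qed.

Lemma lsum_scal l c F : lsum l (fun v => c * F v) = c * lsum l F.
Proof. induction l as [|v l IH]; simpl; [lra | rewrite IH; lra]. Qed.

Lemma lsum_mul l1 l2 F G :
  lsum l1 F * lsum l2 G = lsum l1 (fun v => lsum l2 (fun w => F v * G w)).
Proof.
  induction l1 as [|v l1 IH]; simpl; [lra|].
  rewrite Rmult_plus_distr_r, IH, <- lsum_scal. reflexivity.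
Qed.

Lemma lsum_flat_map l1 l2 F :
  lsum (flat_map (fun v => map (fun w i => v i * w i) l2) l1) F
  = lsum l1 (fun v => lsum l2 (fun w => F (fun i => v i * w i))).
Proof. induction l1 as [|v l1 IH]; simpl; [reflexivity|]. now rewrite lsum_app, lsum_map, IH. Qed.

Lemma lsum_nonneg l F : (forall v, 0 <= F v) -> 0 <= lsum l F.
Proof. intros H. induction l as [|v l IH]; simpl; [lra|]. specialize (H v). lra. Qed.

Lemma sumR_lsum n l (F : nat -> (nat -> R) -> R) :
  sumR n (fun i => lsum l (F i)) = lsum l (fun v => sumR n (fun i => F i v)).
Proof.
  induction l as [|v l IH]; simpl; [apply sumR_0|].
  now rewrite sumR_add, IH.
Qed.

Definition gram n (K : nat -> nat -> R) : Prop :=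
  exists l : list (nat -> R),
    forall i j, (i < n)%nat -> (j < n)%nat -> K i j = lsum l (fun v => v i * v j).

Lemma gram_qform_nonneg n K x : gram n K -> 0 <= qform n K x.
Proof.
  intros [l Hl]. unfold qform.
  rewrite (sumR_ext n _ (fun i => lsum l (fun v => sumR n (fun j => (x i * v i) * (x j * v j))))).
  - rewrite sumR_lsum. apply lsum_nonneg. intros v.
    rewrite (sumR_ext n _ (fun i => sumR n (fun j => x j * v j) * (x i * v i))).
    + rewrite (sumR_scal n _ (fun i => x i * v i)). apply Rle_0_sqr.
    + intros i _. rewrite (Rmult_comm (sumR n _)), <- sumR_scal.
      apply sumR_ext; intros; ring.
  - intros i Hi. rewrite <- sumR_lsum. apply sumR_ext; intros j Hj.
    rewrite Hl, <- lsum_scal by auto. apply lsum_ext; intros; ring.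
Qed.

Lemma gram_ext n K1 K2 :
  (forall i j, (i < n)%nat -> (j < n)%nat -> K1 i j = K2 i j) -> gram n K1 -> gram n K2.
Proof. intros H [l Hl]. exists l. intros. rewrite <- H; auto. Qed.

Lemma gram_0 n : gram n (fun _ _ => 0).
Proof. now exists nil. Qed.

Lemma gram_rank1 n (v : nat -> R) : gram n (fun i j => v i * v j).
Proof. exists (v :: nil). intros. simpl. ring. Qed.

Lemma gram_add n K1 K2 : gram n K1 -> gram n K2 -> gram n (fun i j => K1 i j + K2 i j).
Proof. intros [l1 H1] [l2 H2]. exists (l1 ++ l2). intros. now rewrite lsum_app, H1, H2. Qed.

(* Schur product: the Gram vectors of a product are the pointwise products. *)
Lemma gram_mul n K1 K2 : gram n K1 -> gram n K2 -> gram n (fun i j => K1 i j * K2 i j).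
Proof.
  intros [l1 H1] [l2 H2].
  exists (flat_map (fun v => map (fun w i => v i * w i) l2) l1). intros i j Hi Hj.
  rewrite H1, H2, lsum_mul, lsum_flat_map by auto.
  apply lsum_ext; intros v. apply lsum_ext; intros w. ring.
Qed.

Lemma gram_scal n c K : 0 <= c -> gram n K -> gram n (fun i j => c * K i j).
Proof.
  intros Hc [l H]. exists (map (fun v i => sqrt c * v i) l). intros i j Hi Hj.
  rewrite lsum_map, H, <- lsum_scal by auto. apply lsum_ext; intros v.
  pose proof (sqrt_sqrt c Hc). nra.
Qed.

Lemma gram_pow n K m : gram n K -> gram n (fun i j => K i j ^ m).
Proof.
  intros H. induction m as [|m IH]; simpl.
  - apply (gram_ext n (fun i j => 1 * 1)); [intros; ring | apply (gram_rank1 n (fun _ => 1))].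
  - now apply gram_mul.
Qed.

Lemma gram_sumR n N (K : nat -> nat -> nat -> R) :
  (forall c, (c < N)%nat -> gram n (K c)) -> gram n (fun i j => sumR N (fun c => K c i j)).
Proof.
  induction N as [|N IH]; intros H; simpl; [apply gram_0|].
  apply gram_add; [apply IH; intros |]; apply H; lia.
Qed.

Fixpoint count_pos (n : nat) (s : nat -> R) : nat :=
  match n with
  | O => O
  | S m => (count_pos m s + if Rlt_dec 0 (s m) then 1 else 0)%nat
  end.

Lemma count_pos_le n s s' :
  (forall i, (i < n)%nat -> 0 < s' i -> 0 < s i) -> (count_pos n s' <= count_pos n s)%nat.
Proof.
  induction n as [|n IH]; intros H; simpl; [lia|].
  assert (count_pos n s' <= count_pos n s)%nat by (apply IH; intros; apply H; auto; lia).
  destruct (Rlt_dec 0 (s' n)) as [H'|]; destruct (Rlt_dec 0 (s n)); try lia.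
  exfalso. auto.
Qed.

Lemma count_pos_lt n s s' i0 :
  (forall i, (i < n)%nat -> 0 < s' i -> 0 < s i) ->
  (i0 < n)%nat -> 0 < s i0 -> ~ 0 < s' i0 -> (count_pos n s' < count_pos n s)%nat.
Proof.
  induction n as [|n IH]; intros H Hi Hs Hs'; simpl; [lia|].
  destruct (Nat.eq_dec i0 n) as [->|Hne].
  - assert (count_pos n s' <= count_pos n s)%nat by (apply count_pos_le; intros; apply H; auto; lia).
    destruct (Rlt_dec 0 (s' n)); destruct (Rlt_dec 0 (s n)); tauto || lia.
  - assert (count_pos n s' < count_pos n s)%nat by (apply IH; auto; try lia; intros; apply H; auto; lia).
    destruct (Rlt_dec 0 (s' n)) as [H'|]; destruct (Rlt_dec 0 (s n)); try lia.
    exfalso. auto.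
Qed.

Lemma min_pos_entry n s :
  (forall i, (i < n)%nat -> s i <= 0) \/
  exists i0, (i0 < n)%nat /\ 0 < s i0 /\ forall j, (j < n)%nat -> 0 < s j -> s i0 <= s j.
Proof.
  induction n as [|n [Hnone | (i0 & Hi0 & Hpos & Hmin)]].
  - left. intros; lia.
  - destruct (Rlt_dec 0 (s n)) as [Hn|Hn].
    + right. exists n. split; [lia|split; [exact Hn|]].
      intros j Hj Hsj. destruct (Nat.eq_dec j n) as [->|]; [lra|].
      specialize (Hnone j ltac:(lia)). lra.
    + left. intros i Hi. destruct (Nat.eq_dec i n) as [->|]; [lra|]. apply Hnone; lia.
  - right. destruct (Rlt_dec 0 (s n)) as [Hn|Hn]; [destruct (Rlt_dec (s n) (s i0)) as [Hlt|Hge]|].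
    { exists n. split; [lia|split; [exact Hn|]].
      intros j Hj Hsj. destruct (Nat.eq_dec j n) as [->|]; [lra|].
      specialize (Hmin j ltac:(lia) Hsj). lra. }
    all: exists i0; split; [lia|split; [exact Hpos|]].
    all: intros j Hj Hsj; destruct (Nat.eq_dec j n) as [->|]; [lra|]; apply Hmin; auto; lia.
Qed.

(* Peel off the smallest positive value [mu]: [min s_i s_j] is [mu] times the
   indicator kernel of the positive entries plus the min kernel of the shifted
   values, which have strictly fewer positive entries. *)
Lemma gram_min n s : (forall i, (i < n)%nat -> 0 <= s i) -> gram n (fun i j => Rmin (s i) (s j)).
Proof.
  remember (S (count_pos n s)) as m eqn:Hm.
  assert (Hlt : (count_pos n s < m)%nat) by lia. clear Hm.
  revert s Hlt. induction m as [|m IH]; intros s Hlt Hs; [lia|].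
  destruct (min_pos_entry n s) as [Hnone | (i0 & Hi0 & Hpos & Hmin)].
  - apply (gram_ext n (fun _ _ => 0)); [|apply gram_0].
    intros i j Hi Hj. pose proof (Hnone i Hi). pose proof (Hnone j Hj).
    pose proof (Hs i Hi). pose proof (Hs j Hj).
    replace (s i) with 0 by lra. replace (s j) with 0 by lra. now rewrite Rmin_left by lra.
  - set (mu := s i0).
    set (ind := fun i => if Rlt_dec 0 (s i) then 1 else 0).
    set (s' := fun i => if Rlt_dec 0 (s i) then s i - mu else 0).
    apply (gram_ext n (fun i j => mu * (ind i * ind j) + Rmin (s' i) (s' j))).
    + intros i j Hi Hj. unfold ind, s'.
      pose proof (Hmin i Hi). pose proof (Hmin j Hj). pose proof (Hs i Hi). pose proof (Hs j Hj).
      destruct (Rlt_dec 0 (s i)); destruct (Rlt_dec 0 (s j)); unfold Rmin;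
        repeat destruct Rle_dec; unfold mu in *; nra.
    + apply gram_add; [apply gram_scal; [unfold mu; lra | apply gram_rank1]|].
      apply IH.
      * assert (count_pos n s' < count_pos n s)%nat; [|lia].
        apply (count_pos_lt n s s' i0); auto.
        -- intros i Hi. unfold s'. destruct (Rlt_dec 0 (s i)); auto. lra.
        -- unfold s'. destruct (Rlt_dec 0 (s i0)); unfold mu; lra.
      * intros i Hi. unfold s'. destruct (Rlt_dec 0 (s i)) as [Hsi|]; [|lra].
        pose proof (Hmin i Hi Hsi). unfold mu. lra.
Qed.

Lemma gram_shifted_abs n (t : nat -> R) B L :
  (forall i, (i < n)%nat -> Rabs (t i) <= B) -> 2 * B <= L ->
  gram n (fun i j => L - Rabs (t i - t j)).
Proof.
  intros Hb HL.
  apply (gram_ext n (fun i j => Rmin (t i + B) (t j + B) + Rmin (L - (t i + B)) (L - (t j + B)))).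
  - intros i j Hi Hj. pose proof (Hb i Hi). pose proof (Hb j Hj).
    unfold Rmin, Rabs in *. repeat destruct Rle_dec; repeat destruct Rcase_abs; lra.
  - apply gram_add; apply gram_min; intros i Hi; pose proof (Hb i Hi);
      unfold Rabs in *; destruct Rcase_abs; lra.
Qed.

Lemma derivable_pt_lim_pow_sub c k s :
  derivable_pt_lim (fun s => (c - s) ^ k) s (- (INR k * (c - s) ^ pred k)).
Proof.
  assert (Hlin : derivable_pt_lim (fun s => c - s) s (0 - 1)).
  { apply (derivable_pt_lim_minus (fct_cte c) id);
      [apply derivable_pt_lim_const | apply derivable_pt_lim_id]. }
  pose proof (derivable_pt_lim_comp _ (fun y => y ^ k) s _ _ Hlin (derivable_pt_lim_pow (c - s) k)) as H.
  replace (- (INR k * (c - s) ^ pred k)) with (INR k * (c - s) ^ pred k * (0 - 1)) by ring.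
  exact H.
Qed.

Lemma antitone_of_deriv_nonpos F F' u v :
  u <= v -> (forall s, u <= s <= v -> derivable_pt_lim F s (F' s)) ->
  (forall s, u <= s <= v -> F' s <= 0) -> F v <= F u.
Proof.
  intros Huv Hd Hn. destruct (Req_dec u v) as [->|Hne]; [lra|].
  destruct (MVT_cor2 F F' u v) as [c [E Hc]]; [lra | assumption |].
  assert (F' c <= 0) by (apply Hn; lra). nra.
Qed.

Lemma mul_pow_sub_swap y x s m :
  y * (x - s) ^ m = - ((-1) ^ S m * y) * (s - x) ^ m.
Proof.
  replace (x - s) with (-1 * (s - x)) by ring. rewrite Rpow_mult_distr. simpl.
  replace ((-1) ^ m * (-1) ^ m) with 1; [ring|].
  rewrite <- Rpow_mult_distr. replace (-1 * -1) with 1 by ring. now rewrite pow1.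
Qed.

Section CompletelyMonotoneTaylor.

Variable f : nat -> R -> R.
Variable a : R.
Hypothesis a_pos : 0 < a.
Hypothesis f_deriv : forall n t, 0 < t -> derivable_pt_lim (f n) t (f (S n) t).
Hypothesis f_sign : forall n t, 0 < t <= a -> 0 <= (-1) ^ n * f n t.

Definition cm_coef k := (-1) ^ k * f k a / INR (fact k).

Definition cm_taylor n x := sumR n (fun k => cm_coef k * (a - x) ^ k).

Definition taylor_at x n s := sumR n (fun k => f k s * (x - s) ^ k / INR (fact k)).

Lemma cm_coef_nonneg k : 0 <= cm_coef k.
Proof.
  apply Rmult_le_pos; [apply f_sign; lra|].
  left. apply Rinv_0_lt_compat, INR_fact_lt_0.
Qed.

Lemma cm_taylor_nonneg n x : x <= a -> 0 <= cm_taylor n x.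
Proof.
  intros. apply sumR_nonneg. intros.
  apply Rmult_le_pos; [apply cm_coef_nonneg | apply pow_le; lra].
Qed.

Lemma cm_taylor_antitone n x : 0 <= x <= a -> cm_taylor n x <= cm_taylor n 0.
Proof.
  intros. apply sumR_le. intros.
  apply Rmult_le_compat_l; [apply cm_coef_nonneg | apply pow_incr; lra].
Qed.

Lemma taylor_at_a x n : taylor_at x n a = cm_taylor n x.
Proof.
  apply sumR_ext. intros k _. unfold cm_coef.
  replace (x - a) with (-1 * (a - x)) by ring. rewrite Rpow_mult_distr.
  field. apply INR_fact_neq_0.
Qed.

Lemma taylor_at_self x n : (0 < n)%nat -> taylor_at x n x = f 0 x.
Proof.
  intros Hn. induction n as [|n IH]; [lia|]. unfold taylor_at in *.
  change (sumR (S n) ?F) with (sumR n F + F n).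
  destruct n as [|n]; [simpl; field|].
  rewrite IH by lia. replace (x - x) with 0 by ring. rewrite pow_i by lia.
  field. apply INR_fact_neq_0.
Qed.

(* The derivative in the base point telescopes to the last term. *)
Lemma taylor_at_deriv x n s : 0 < s ->
  derivable_pt_lim (taylor_at x (S n)) s (f (S n) s * (x - s) ^ n / INR (fact n)).
Proof.
  intros Hs. induction n as [|n IH].
  - apply (derivable_pt_lim_ext (f 0)); [intros; unfold taylor_at; simpl; field|].
    replace (f 1%nat s * (x - s) ^ 0 / INR (fact 0)) with (f 1%nat s) by (simpl; field).
    now apply f_deriv.
  - assert (HSn : INR (S n) <> 0) by (apply not_0_INR; lia).
    apply (derivable_pt_lim_ext
             (fun y => taylor_at x (S n) y + f (S n) y * ((x - y) ^ S n * / INR (fact (S n))))).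
    { intros y. unfold taylor_at. change (sumR (S (S n)) ?F) with (sumR (S n) F + F (S n)).
      unfold Rdiv. ring. }
    replace (f (S (S n)) s * (x - s) ^ S n / INR (fact (S n)))
      with (f (S n) s * (x - s) ^ n / INR (fact n)
            + (f (S (S n)) s * ((x - s) ^ S n * / INR (fact (S n)))
               + f (S n) s * (- (INR (S n) * (x - s) ^ pred (S n)) * / INR (fact (S n)) + (x - s) ^ S n * 0))).
    2:{ rewrite fact_simpl, mult_INR. simpl pred. field. split; [apply INR_fact_neq_0 | exact HSn]. }
    apply (derivable_pt_lim_plus (taylor_at x (S n))
             (fun y => f (S n) y * ((x - y) ^ S n * / INR (fact (S n))))); [exact IH|].
    apply (derivable_pt_lim_mult (f (S n)) (fun y => (x - y) ^ S n * / INR (fact (S n))));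
      [now apply f_deriv|].
    apply (derivable_pt_lim_mult (fun y => (x - y) ^ S n) (fun _ => / INR (fact (S n))));
      [apply derivable_pt_lim_pow_sub | apply derivable_pt_lim_const].
Qed.

Lemma taylor_at_antitone x m u v :
  0 < u -> u <= v -> v <= a -> x <= u -> taylor_at x (S m) v <= taylor_at x (S m) u.
Proof.
  intros. apply (antitone_of_deriv_nonpos _ (fun s => f (S m) s * (x - s) ^ m / INR (fact m)));
    [assumption | intros; apply taylor_at_deriv; lra |].
  intros s Hs. unfold Rdiv. rewrite mul_pow_sub_swap.
  assert (0 <= (-1) ^ S m * f (S m) s) by (apply f_sign; lra).
  assert (0 <= (s - x) ^ m) by (apply pow_le; lra).
  assert (0 < / INR (fact m)) by apply Rinv_0_lt_compat, INR_fact_lt_0.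
  assert (0 <= (-1) ^ S m * f (S m) s * (s - x) ^ m) by nra. nra.
Qed.

Lemma cm_taylor_le n x : 0 < x <= a -> cm_taylor n x <= f 0 x.
Proof.
  intros Hx. destruct n as [|n].
  - pose proof (f_sign 0 x Hx). unfold cm_taylor. simpl in *. lra.
  - rewrite <- taylor_at_a, <- (taylor_at_self x (S n)) by lia.
    apply taylor_at_antitone; lra.
Qed.

Lemma cm_coef_term_le k x : 0 < x <= a -> cm_coef k * (a - x) ^ k <= f 0 x.
Proof.
  intros Hx. eapply Rle_trans; [|apply (cm_taylor_le (S k) x Hx)].
  unfold cm_taylor. simpl.
  pose proof (cm_taylor_nonneg k x ltac:(lra)). unfold cm_taylor in *. lra.
Qed.

Lemma cm_taylor0_le_half n : cm_taylor n 0 <= (2 ^ n - 1) * f 0 (a / 2).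
Proof.
  replace (2 ^ n - 1) with (sumR n (fun k => 2 ^ k)).
  2:{ induction n as [|n IH]; simpl; [lra | rewrite IH; ring]. }
  rewrite Rmult_comm, <- sumR_scal. apply sumR_le. intros k _.
  pose proof (cm_coef_term_le k (a / 2) ltac:(lra)).
  replace (a - 0) with (2 * (a - a / 2)) by field. rewrite Rpow_mult_distr.
  assert (0 <= 2 ^ k) by (apply pow_le; lra). nra.
Qed.

Lemma cm_taylor_remainder_contract m x y : 0 < y -> y < x -> x <= a ->
  f 0 x - cm_taylor (S m) x <= ((a - x) / (a - y)) ^ m * (f 0 y - cm_taylor (S m) y).
Proof.
  intros Hy Hyx Hxa. set (r := (a - x) / (a - y)).
  assert (Hr : 0 <= r) by (apply Rmult_le_pos; [lra | left; apply Rinv_0_lt_compat; lra]).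
  assert (Hrm : 0 <= r ^ m) by (apply pow_le; auto).
  set (P := fun s => r ^ m * taylor_at y (S m) s - taylor_at x (S m) s).
  assert (HP : P a <= P x).
  { apply (antitone_of_deriv_nonpos P (fun s => r ^ m * (f (S m) s * (y - s) ^ m / INR (fact m))
                                               - f (S m) s * (x - s) ^ m / INR (fact m)));
      [assumption | |].
    - intros s Hs.
      apply (derivable_pt_lim_minus (fun s => r ^ m * taylor_at y (S m) s) (taylor_at x (S m))).
      + apply (derivable_pt_lim_scal (taylor_at y (S m))), taylor_at_deriv. lra.
      + apply taylor_at_deriv. lra.
    - intros s Hs. unfold Rdiv. rewrite (mul_pow_sub_swap _ y), (mul_pow_sub_swap _ x).
      set (G := (-1) ^ S m * f (S m) s). set (I := / INR (fact m)).
      assert (0 <= G) by (apply f_sign; lra).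
      assert (0 < I) by apply Rinv_0_lt_compat, INR_fact_lt_0.
      assert ((s - x) ^ m <= r ^ m * (s - y) ^ m).
      { rewrite <- Rpow_mult_distr. apply pow_incr. split; [lra|].
        assert (r * (s - y) - (s - x) = (a - s) * (x - y) / (a - y)) by (unfold r; field; lra).
        assert (0 <= (a - s) * (x - y) / (a - y))
          by (apply Rmult_le_pos; [apply Rmult_le_pos; lra | left; apply Rinv_0_lt_compat; lra]).
        lra. }
      assert (0 <= G * I * (r ^ m * (s - y) ^ m - (s - x) ^ m))
        by (apply Rmult_le_pos; [apply Rmult_le_pos|]; lra).
      replace (r ^ m * (- G * (s - y) ^ m * I) - - G * (s - x) ^ m * I)
        with (- (G * I * (r ^ m * (s - y) ^ m - (s - x) ^ m))) by ring.
      lra. }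
  assert (r ^ m * taylor_at y (S m) x <= r ^ m * taylor_at y (S m) y)
    by (apply Rmult_le_compat_l; [assumption | apply taylor_at_antitone; lra]).
  unfold P in HP. rewrite <- !taylor_at_a.
  rewrite <- (taylor_at_self x (S m)) at 1 by lia. rewrite <- (taylor_at_self y (S m)) by lia.
  lra.
Qed.

Lemma cm_taylor_cv_pos x : 0 < x <= a -> Un_cv (fun n => cm_taylor n x) (f 0 x).
Proof.
  intros Hx e He.
  set (y := x / 2). set (r := (a - x) / (a - y)).
  assert (Hr : 0 <= r < 1).
  { unfold r, y. split; [apply Rmult_le_pos; [lra | left; apply Rinv_0_lt_compat; lra]|].
    apply (Rmult_lt_reg_r (a - x / 2)); [lra|].
    unfold Rdiv. rewrite Rmult_assoc, Rinv_l by lra. lra. }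
  assert (Hfy : 0 <= f 0 y) by (pose proof (f_sign 0 y ltac:(unfold y; lra)); simpl in *; lra).
  destruct (pow_lt_1_zero r ltac:(rewrite Rabs_right; lra) (e / (f 0 y + 1))) as [N HN];
    [apply Rdiv_lt_0_compat; lra|].
  exists (S N). intros n Hn. destruct n as [|n]; [lia|].
  pose proof (cm_taylor_remainder_contract n x y ltac:(unfold y; lra) ltac:(unfold y; lra) ltac:(lra))
    as Hcontract.
  fold r in Hcontract.
  pose proof (cm_taylor_le (S n) x Hx).
  pose proof (cm_taylor_nonneg (S n) y ltac:(unfold y; lra)).
  specialize (HN n ltac:(lia)). rewrite Rabs_right in HN by (apply Rle_ge, pow_le; lra).
  assert (r ^ n * (f 0 y + 1) < e).
  { apply (Rmult_lt_compat_r (f 0 y + 1)) in HN; [|lra].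
    unfold Rdiv in HN. rewrite Rmult_assoc, Rinv_l, Rmult_1_r in HN by lra. exact HN. }
  assert (r ^ n * (f 0 y - cm_taylor (S n) y) <= r ^ n * (f 0 y + 1))
    by (apply Rmult_le_compat_l; [apply pow_le |]; lra).
  unfold R_dist. rewrite Rabs_left1 by lra. lra.
Qed.

Lemma cm_taylor_continuous n : continuity_pt (cm_taylor n) 0.
Proof.
  apply derivable_continuous_pt. induction n as [|n [l Hl]].
  - exists 0. apply (derivable_pt_lim_const 0).
  - eexists. apply (derivable_pt_lim_plus (cm_taylor n) (fun x => cm_coef n * (a - x) ^ n)); [exact Hl|].
    apply (derivable_pt_lim_mult (fun _ => cm_coef n));
      [apply derivable_pt_lim_const | apply derivable_pt_lim_pow_sub].
Qed.

Variable g : R -> R.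
Hypothesis g_eq : forall x, 0 < x <= a -> f 0 x = g x.
Hypothesis g_right_cont : forall eps, 0 < eps -> exists delta, 0 < delta /\
  forall x, 0 <= x < delta -> Rabs (g x - g 0) < eps.

Lemma cm_taylor0_le n : cm_taylor n 0 <= g 0.
Proof.
  destruct (Rle_dec (cm_taylor n 0) (g 0)) as [|Hn]; [assumption|exfalso].
  set (e := (cm_taylor n 0 - g 0) / 2).
  destruct (g_right_cont e) as [d1 [Hd1 H1]]; [unfold e; lra|].
  destruct (cm_taylor_continuous n e) as [d2 [Hd2 H2]]; [unfold e; lra|].
  set (x := Rmin (Rmin d1 d2) a / 2).
  assert (0 < Rmin (Rmin d1 d2) a) by (repeat apply Rmin_glb_lt; lra).
  assert (Rmin (Rmin d1 d2) a <= d1) by (eapply Rle_trans; apply Rmin_l).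
  assert (Rmin (Rmin d1 d2) a <= d2) by (eapply Rle_trans; [apply Rmin_l | apply Rmin_r]).
  assert (Rmin (Rmin d1 d2) a <= a) by apply Rmin_r.
  specialize (H1 x ltac:(unfold x; lra)).
  specialize (H2 x ltac:(split; [split; [exact I | unfold x; lra]
                                  | simpl; unfold R_dist, x; rewrite Rminus_0_r, Rabs_right; lra])).
  pose proof (cm_taylor_le n x ltac:(unfold x; lra)).
  rewrite g_eq in * by (unfold x; lra).
  simpl in H2. unfold R_dist in H2. apply Rabs_def2 in H1, H2. unfold e in *. lra.
Qed.

Lemma cm_taylor_cv x : 0 <= x <= a -> Un_cv (fun n => cm_taylor n x) (g x).
Proof.
  intros [[Hx|<-] Hxa]; [rewrite <- g_eq by lra; now apply cm_taylor_cv_pos|].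
  intros e He.
  destruct (g_right_cont (e / 2)) as [d [Hd Hg]]; [lra|].
  set (x := Rmin d a / 2).
  assert (0 < Rmin d a) by (apply Rmin_glb_lt; lra).
  assert (Rmin d a <= d) by apply Rmin_l. assert (Rmin d a <= a) by apply Rmin_r.
  specialize (Hg x ltac:(unfold x; lra)). rewrite <- g_eq in Hg by (unfold x; lra).
  apply Rabs_def2 in Hg.
  destruct (cm_taylor_cv_pos x ltac:(unfold x; lra) (e / 2)) as [N HN]; [lra|].
  exists N. intros n Hn. specialize (HN n Hn). unfold R_dist in *. apply Rabs_def2 in HN.
  pose proof (cm_taylor_antitone n x ltac:(unfold x; lra)).
  pose proof (cm_taylor0_le n).
  rewrite Rabs_left1 by lra. lra.
Qed.

End CompletelyMonotoneTaylor.

Lemma cm_deriv_vanish f m b :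
  (forall n x, 0 < x -> derivable_pt_lim (f n) x (f (S n) x)) ->
  (forall n x, 0 < x -> 0 <= (-1) ^ n * f n x) ->
  0 < b -> (-1) ^ m * f m b = 0 ->
  forall j t, (m <= j)%nat -> b < t -> f j t = 0.
Proof.
  intros Hd Hs Hb Hz.
  assert (Hm : forall t, b < t -> f m t = 0).
  { intros t Ht.
    assert ((-1) ^ m * f m t <= (-1) ^ m * f m b).
    { apply (antitone_of_deriv_nonpos (fun s => (-1) ^ m * f m s) (fun s => (-1) ^ m * f (S m) s));
        [lra | intros s Hs0; apply (derivable_pt_lim_scal (f m)), Hd; lra |].
      intros s Hs0. pose proof (Hs (S m) s ltac:(lra)).
      replace ((-1) ^ S m * f (S m) s) with (- ((-1) ^ m * f (S m) s)) in * by (simpl; ring).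
      lra. }
    pose proof (Hs m t ltac:(lra)).
    destruct (Rmult_integral ((-1) ^ m) (f m t)) as [Habs|]; [lra| |assumption].
    exfalso. revert Habs. apply pow_nonzero. lra. }
  intros j t Hj. revert t. induction Hj as [|j Hj IH]; [exact Hm|].
  intros t Ht. apply (uniqueness_limite (f j) t); [apply Hd; lra|].
  apply (derivable_pt_lim_locally_ext (fun _ => 0) (f j) t b (t + 1));
    [lra | intros z Hz'; symmetry; apply IH; lra | apply derivable_pt_lim_const].
Qed.

(* If some derivative of [phi] vanished at [b], then [phi] would be a
   polynomial of degree [< m] on [[0, c]] for every [c > b]; comparing its
   Taylor coefficients at [c] with [phi (c / 2)], which is small for large
   [c], contradicts [phi 0 = 1]. *)
Lemma cm_strict phi f :
  (forall x, 0 < x -> f 0%nat x = phi x) ->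
  (forall n x, 0 < x -> derivable_pt_lim (f n) x (f (S n) x)) ->
  (forall n x, 0 < x -> 0 <= (-1) ^ n * f n x) ->
  (forall eps, 0 < eps -> exists delta, 0 < delta /\
     forall x, 0 <= x < delta -> Rabs (phi x - phi 0) < eps) ->
  phi 0 = 1 ->
  (forall eps, 0 < eps -> exists M, forall x, M <= x -> Rabs (phi x) < eps) ->
  forall m b, 0 < b -> 0 < (-1) ^ m * f m b.
Proof.
  intros Hf0 Hd Hs Hc H0 Hlim m b Hb.
  destruct (Rlt_dec 0 ((-1) ^ m * f m b)) as [|Hnot]; [assumption|exfalso].
  pose proof (cm_deriv_vanish f m b Hd Hs Hb ltac:(pose proof (Hs m b Hb); lra)) as Hvanish.
  destruct (Hlim (/ 2 ^ m)) as [M HM]; [apply Rinv_0_lt_compat, pow_lt; lra|].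
  set (c := 2 * Rmax M (b + 1)).
  assert (HMc : M <= c / 2) by (pose proof (Rmax_l M (b + 1)); unfold c; lra).
  assert (Hbc : b < c) by (pose proof (Rmax_r M (b + 1)); unfold c; lra).
  assert (Hs' : forall n t, 0 < t <= c -> 0 <= (-1) ^ n * f n t) by (intros; apply Hs; lra).
  assert (Hexact : cm_taylor f c m 0 = 1).
  { rewrite <- H0. apply (Un_cv_eventually_const (fun n => cm_taylor f c n 0) _ m).
    - apply (cm_taylor_cv f c ltac:(lra) Hd Hs' phi); [intros; apply Hf0; lra | exact Hc | lra].
    - intros n Hn. induction Hn as [|n Hn IH]; [reflexivity|].
      unfold cm_taylor in *. simpl. rewrite IH. unfold cm_coef.
      rewrite (Hvanish n c Hn Hbc). unfold Rdiv. ring. }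
  pose proof (cm_taylor0_le_half f c ltac:(lra) Hd Hs' m) as Hhalf.
  rewrite Hexact, Hf0 in Hhalf by lra.
  assert (Hpos : 0 <= phi (c / 2))
    by (rewrite <- Hf0 by lra; pose proof (Hs 0%nat (c / 2) ltac:(lra)); simpl in *; lra).
  specialize (HM (c / 2) HMc). rewrite Rabs_right in HM by lra.
  assert (H2m : 0 < 2 ^ m) by (apply pow_lt; lra).
  assert (2 ^ m * phi (c / 2) < 1).
  { apply (Rmult_lt_compat_l (2 ^ m)) in HM; [|exact H2m]. now rewrite Rinv_r in HM by lra. }
  replace ((2 ^ m - 1) * phi (c / 2)) with (2 ^ m * phi (c / 2) - phi (c / 2)) in Hhalf by ring.
  lra.
Qed.

Fixpoint falling (p : R) (k : nat) : R :=
  match k with O => 1 | S k' => falling p k' * (p - INR k') end.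

(* The derivatives of [t |-> L ^ p - t ^ p]. *)
Definition powgap (L p : R) (k : nat) (t : R) : R :=
  match k with
  | O => Rpower L p - Rpower t p
  | S _ => - falling p k * Rpower t (p - INR k)
  end.

Lemma powgap_deriv L p k t : 0 < t -> derivable_pt_lim (powgap L p k) t (powgap L p (S k) t).
Proof.
  intros Ht. destruct k as [|k].
  - apply (derivable_pt_lim_ext (fun x => Rpower L p - Rpower x p)); [reflexivity|].
    replace (powgap L p 1 t) with (0 - p * Rpower t (p - 1)) by (simpl; ring).
    apply (derivable_pt_lim_minus (fct_cte (Rpower L p)) (fun x => Rpower x p));
      [apply derivable_pt_lim_const | now apply derivable_pt_lim_power].
  - unfold powgap.
    replace (- falling p (S (S k)) * Rpower t (p - INR (S (S k))))
      with (- falling p (S k) * ((p - INR (S k)) * Rpower t (p - INR (S k) - 1))).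
    2:{ change (falling p (S (S k))) with (falling p (S k) * (p - INR (S k))).
        replace (p - INR (S (S k))) with (p - INR (S k) - 1)
          by (rewrite (S_INR (S k)); ring). ring. }
    apply (derivable_pt_lim_scal (fun x => Rpower x (p - INR (S k)))).
    now apply derivable_pt_lim_power.
Qed.

Lemma falling_sign p k : 0 < p <= 1 -> 0 <= (-1) ^ k * falling p (S k).
Proof.
  intros Hp. induction k as [|k IH]; [simpl; lra|].
  assert (1 <= INR (S k)) by (rewrite S_INR; pose proof (pos_INR k); lra).
  replace ((-1) ^ S k * falling p (S (S k)))
    with ((-1) ^ k * falling p (S k) * (INR (S k) - p)) by (simpl; ring).
  apply Rmult_le_pos; lra.
Qed.

Lemma powgap_sign L p k t : 0 < p <= 1 -> 0 < t <= L -> 0 <= (-1) ^ k * powgap L p k t.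
Proof.
  intros Hp Ht. destruct k as [|k].
  - simpl. pose proof (Rle_Rpower_l t L p ltac:(lra) ltac:(lra)). lra.
  - unfold powgap. pose proof (falling_sign p k Hp). pose proof (exp_pos ((p - INR (S k)) * ln t)).
    replace ((-1) ^ S k * (- falling p (S k) * Rpower t (p - INR (S k))))
      with ((-1) ^ k * falling p (S k) * Rpower t (p - INR (S k))) by (simpl; ring).
    apply Rmult_le_pos; [assumption | unfold Rpower; lra].
Qed.

Lemma abspow_nonneg t p : 0 <= abspow t p.
Proof. unfold abspow. destruct Req_EM_T; [lra | left; apply exp_pos]. Qed.

Lemma abspow_pos t p : t <> 0 -> 0 < abspow t p.
Proof. unfold abspow. destruct Req_EM_T; [contradiction | intros; apply exp_pos]. Qed.

Lemma abspow_0 p : abspow 0 p = 0.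
Proof. unfold abspow. destruct Req_EM_T; [reflexivity | contradiction]. Qed.

Lemma abspow_abs t p : abspow (Rabs t) p = abspow t p.
Proof.
  unfold abspow. rewrite Rabs_Rabsolu.
  destruct (Req_EM_T (Rabs t) 0) as [E|Hne]; destruct (Req_EM_T t 0) as [->|Ht]; try reflexivity.
  - exact (False_ind _ (Rabs_no_R0 t Ht E)).
  - exfalso. apply Hne. apply Rabs_R0.
Qed.

Lemma abspow_opp t p : abspow (- t) p = abspow t p.
Proof. now rewrite <- abspow_abs, Rabs_Ropp, abspow_abs. Qed.

Lemma abspow_le t p L : 0 < p -> Rabs t <= L -> abspow t p <= Rpower L p.
Proof.
  intros Hp H. unfold abspow. destruct Req_EM_T as [|Ht]; [left; apply exp_pos|].
  apply Rle_Rpower_l; [lra | split; [apply Rabs_pos_lt|]; assumption].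
Qed.

Lemma powgap_taylor_cv L p t : 0 < L -> 0 < p <= 1 -> Rabs t <= L ->
  Un_cv (fun N => cm_taylor (powgap L p) L N (Rabs t)) (Rpower L p - abspow t p).
Proof.
  intros HL Hp Ht. rewrite <- abspow_abs.
  apply (cm_taylor_cv (powgap L p) L HL (powgap_deriv L p)
           (fun n t => powgap_sign L p n t Hp) (fun u => Rpower L p - abspow u p)).
  - intros x Hx. simpl. unfold abspow.
    destruct Req_EM_T; [lra|]. now rewrite Rabs_right by lra.
  - intros e He. exists (Rpower e (/ p)). split; [apply exp_pos|].
    intros x Hx. rewrite abspow_0.
    replace (Rpower L p - abspow x p - (Rpower L p - 0)) with (- abspow x p) by ring.
    rewrite Rabs_Ropp, Rabs_right by (apply Rle_ge, abspow_nonneg).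
    unfold abspow. destruct Req_EM_T; [assumption|]. rewrite Rabs_right by lra.
    replace e with (Rpower (Rpower e (/ p)) p).
    + apply Rlt_Rpower_l; lra.
    + rewrite Rpower_mult, Rinv_l by lra. now apply Rpower_1.
  - split; [apply Rabs_pos | assumption].
Qed.

Lemma pnormp_vsub_sym p D u v : pnormp p D (vsub u v) = pnormp p D (vsub v u).
Proof.
  apply sumR_ext. intros d _. unfold vsub.
  replace (u d - v d) with (- (v d - u d)) by ring. apply abspow_opp.
Qed.

Section PnormKernel.

Variable phi : R -> R.
Variable f : nat -> R -> R.
Variables (p : R) (D n : nat) (theta : nat -> nat -> R).
Hypothesis f0_phi : forall x, 0 < x -> f 0%nat x = phi x.
Hypothesis f_deriv : forall m x, 0 < x -> derivable_pt_lim (f m) x (f (S m) x).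
Hypothesis f_sign : forall m x, 0 < x -> 0 <= (-1) ^ m * f m x.
Hypothesis phi_right_cont : forall eps, 0 < eps -> exists delta, 0 < delta /\
  forall x, 0 <= x < delta -> Rabs (phi x - phi 0) < eps.
Hypothesis p_range : 0 < p <= 1.
Hypothesis D_pos : (1 <= D)%nat.

Definition pdist i j := pnormp p D (vsub (theta j) (theta i)).
Definition coord_bound := sumR D (fun d => sumR n (fun i => Rabs (theta i d))).
Definition side := 2 * coord_bound + 1.
Definition diam := sumR D (fun _ => Rpower side p).

Lemma coord_bound_ge i d : (i < n)%nat -> (d < D)%nat -> Rabs (theta i d) <= coord_bound.
Proof.
  intros Hi Hd. eapply Rle_trans; [|apply (sumR_term_le D _ d)]; auto.
  - apply (sumR_term_le n (fun i => Rabs (theta i d))); auto. intros; apply Rabs_pos.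
  - intros; apply sumR_nonneg; intros; apply Rabs_pos.
Qed.

Lemma side_pos : 0 < side.
Proof.
  unfold side. enough (0 <= coord_bound) by lra.
  apply sumR_nonneg; intros; apply sumR_nonneg; intros; apply Rabs_pos.
Qed.

Lemma coord_diff_le i j d : (i < n)%nat -> (j < n)%nat -> (d < D)%nat ->
  Rabs (theta j d - theta i d) <= side.
Proof.
  intros Hi Hj Hd. pose proof (coord_bound_ge i d Hi Hd). pose proof (coord_bound_ge j d Hj Hd).
  unfold side. unfold Rabs in *. repeat destruct Rcase_abs; lra.
Qed.

Lemma diam_pos : 0 < diam.
Proof. apply (sumR_pos D _ 0); [intros; left; apply exp_pos | lia | apply exp_pos]. Qed.

Lemma f_sign_diam m t : 0 < t <= diam -> 0 <= (-1) ^ m * f m t.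
Proof. intros Ht. apply f_sign, Ht. Qed.

Lemma pdist_nonneg i j : 0 <= pdist i j.
Proof. apply sumR_nonneg. intros; apply abspow_nonneg. Qed.

Lemma pdist_diag i : pdist i i = 0.
Proof.
  unfold pdist, pnormp, vsub. rewrite <- (sumR_0 D). apply sumR_ext. intros.
  rewrite Rminus_diag. apply abspow_0.
Qed.

Lemma pdist_le_diam i j : (i < n)%nat -> (j < n)%nat -> pdist i j <= diam.
Proof.
  intros Hi Hj. apply sumR_le. intros d Hd.
  apply abspow_le; [lra | now apply coord_diff_le].
Qed.

Lemma diam_sub_pdist i j :
  diam - pdist i j = sumR D (fun d => Rpower side p - abspow (theta j d - theta i d) p).
Proof. unfold Rminus at 2. rewrite sumR_add, sumR_opp. reflexivity. Qed.

(* Truncated Taylor expansions of [diam - pdist], coordinate by coordinate. *)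
Definition gap_approx N i j :=
  sumR D (fun d => cm_taylor (powgap side p) side N (Rabs (theta j d - theta i d))).

Lemma gap_approx_gram N : gram n (gap_approx N).
Proof.
  apply gram_sumR. intros d Hd. apply gram_sumR. intros k Hk.
  apply gram_scal; [apply (cm_coef_nonneg _ _ side_pos); intros; now apply powgap_sign|].
  apply gram_pow.
  apply (gram_ext n (fun i j => side - Rabs (theta i d - theta j d)));
    [intros; now rewrite Rabs_minus_sym|].
  apply (gram_shifted_abs n (fun i => theta i d) coord_bound); [|unfold side; lra].
  intros; now apply coord_bound_ge.
Qed.

Lemma gap_approx_cv i j : (i < n)%nat -> (j < n)%nat ->
  Un_cv (fun N => gap_approx N i j) (diam - pdist i j).
Proof.
  intros Hi Hj. rewrite diam_sub_pdist.
  apply (Un_cv_sumR D (fun N d => cm_taylor (powgap side p) side N (Rabs (theta j d - theta i d)))).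
  intros d Hd. apply powgap_taylor_cv; [apply side_pos | assumption | now apply coord_diff_le].
Qed.

Lemma power_form_nonneg m x : 0 <= qform n (fun i j => (diam - pdist i j) ^ m) x.
Proof.
  apply (Un_cv_nonneg (fun N => qform n (fun i j => gap_approx N i j ^ m) x)).
  - intros N. apply gram_qform_nonneg, gram_pow, gap_approx_gram.
  - apply (qform_cv n (fun N i j => gap_approx N i j ^ m)).
    intros i j Hi Hj. now apply Un_cv_pow, gap_approx_cv.
Qed.

Lemma phi_form_series x :
  Un_cv (fun M => sumR M (fun m => cm_coef f diam m * qform n (fun i j => (diam - pdist i j) ^ m) x))
        (qform n (fun i j => phi (pdist i j)) x).
Proof.
  apply (Un_cv_ext (fun M => qform n (fun i j => cm_taylor f diam M (pdist i j)) x)).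
  - intros M. unfold cm_taylor. rewrite qform_sumR. apply sumR_ext. intros m _. apply qform_scal.
  - apply (qform_cv n (fun M i j => cm_taylor f diam M (pdist i j))). intros i j Hi Hj.
    apply (cm_taylor_cv f diam diam_pos f_deriv f_sign_diam phi);
      [intros t Ht; apply f0_phi, Ht | exact phi_right_cont |].
    split; [apply pdist_nonneg | now apply pdist_le_diam].
Qed.

Lemma phi_form_nonneg x : 0 <= qform n (fun i j => phi (pdist i j)) x.
Proof.
  apply (Un_cv_nonneg _ _ (fun M => sumR_nonneg M _ (fun m _ =>
           Rmult_le_pos _ _ (cm_coef_nonneg f diam diam_pos f_sign_diam m)
                            (power_form_nonneg m x)))).
  apply phi_form_series.
Qed.

Hypothesis phi_0 : phi 0 = 1.
Hypothesis phi_vanishes : forall eps, 0 < eps -> exists M, forall x, M <= x -> Rabs (phi x) < eps.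
Hypothesis theta_distinct : forall i j, (i < n)%nat -> (j < n)%nat -> i <> j ->
  exists d, (d < D)%nat /\ theta i d <> theta j d.

Lemma pdist_pos i j : (i < n)%nat -> (j < n)%nat -> i <> j -> 0 < pdist i j.
Proof.
  intros Hi Hj Hij. destruct (theta_distinct i j Hi Hj Hij) as [d [Hd Hne]].
  apply (sumR_pos D _ d); [intros; apply abspow_nonneg | assumption |].
  apply abspow_pos. unfold vsub. lra.
Qed.

Lemma phi_form_pos x : (exists i, (i < n)%nat /\ x i <> 0) ->
  0 < qform n (fun i j => phi (pdist i j)) x.
Proof.
  intros Hx.
  destruct (qform_pow_eventually_pos n (fun i j => diam - pdist i j) diam x diam_pos)
    as [m Hm]; [intros; rewrite pdist_diag; ring | | exact Hx |].
  { intros i j Hi Hj Hij. pose proof (pdist_pos i j Hi Hj Hij). pose proof (pdist_le_diam i j Hi Hj).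
    rewrite Rabs_right; lra. }
  assert (Hcoef : 0 < cm_coef f diam m).
  { apply Rdiv_lt_0_compat; [|apply INR_fact_lt_0].
    apply (cm_strict phi f); auto. apply diam_pos. }
  eapply Rlt_le_trans; [apply (Rmult_lt_0_compat _ _ Hcoef Hm)|].
  apply (series_term_le (fun m => cm_coef f diam m * qform n (fun i j => (diam - pdist i j) ^ m) x));
    [|apply phi_form_series].
  intros k. apply Rmult_le_pos;
    [apply (cm_coef_nonneg f diam diam_pos f_sign_diam) | apply power_form_nonneg].
Qed.

End PnormKernel.

Lemma re_sumC n g : re (sumC n g) = sumR n (fun l => re (g l)).
Proof. induction n as [|n IH]; simpl; [reflexivity | now rewrite IH]. Qed.

Lemma im_sumC n g : im (sumC n g) = sumR n (fun l => im (g l)).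
Proof. induction n as [|n IH]; simpl; [reflexivity | now rewrite IH]. Qed.

Definition hermitian_form k (A : nat -> nat -> R) (c : nat -> Cplx) : Cplx :=
  sumC k (fun l => sumC k (fun l' => Cmul (Cmul (Cconj (c l)) (c l')) (Cofreal (A l l')))).

Lemma hermitian_form_re k A c :
  re (hermitian_form k A c) = qform k A (fun l => re (c l)) + qform k A (fun l => im (c l)).
Proof.
  unfold hermitian_form, qform. rewrite re_sumC, <- sumR_add. apply sumR_ext. intros l _.
  rewrite re_sumC, <- sumR_add. apply sumR_ext. intros l' _. simpl. ring.
Qed.

Lemma hermitian_form_im k A c :
  (forall i j, (i < k)%nat -> (j < k)%nat -> A i j = A j i) -> im (hermitian_form k A c) = 0.
Proof.
  intros Asym. unfold hermitian_form. rewrite im_sumC.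
  rewrite (sumR_ext k _ (fun l => sumR k (fun l' => re (c l) * im (c l') * A l l')
                                  + - sumR k (fun l' => im (c l) * re (c l') * A l l'))).
  - rewrite sumR_add, sumR_opp, (sumR_swap k k (fun l l' => im (c l) * re (c l') * A l l')).
    enough (sumR k (fun l => sumR k (fun l' => re (c l) * im (c l') * A l l'))
            = sumR k (fun l' => sumR k (fun l => im (c l) * re (c l') * A l l'))) by lra.
    apply sumR_ext. intros l Hl. apply sumR_ext. intros l' Hl'. rewrite Asym by assumption. ring.
  - intros l _. rewrite im_sumC, <- sumR_opp, <- sumR_add. apply sumR_ext. intros. simpl. ring.
Qed.

Lemma Cplx_neq_0 z : z <> C0 -> re z <> 0 \/ im z <> 0.
Proof.
  destruct z as [x y]. unfold C0. simpl. intros Hz.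
  destruct (Req_dec x 0) as [->|]; [|now left].
  destruct (Req_dec y 0) as [->|]; [contradiction | now right].
Qed.

Theorem mainTheorem4 (phi : R -> R) (p : R) (D : nat) :
  CMF phi ->
  phi 0 = 1 ->
  (forall eps, 0 < eps -> exists M, forall x, M <= x -> Rabs (phi x) < eps) ->
  0 < p -> p <= 1 ->
  (1 <= D)%nat ->
  forall (k : nat) (theta : nat -> nat -> R) (c : nat -> Cplx),
    (1 <= k)%nat ->
    (forall l l', (l < k)%nat -> (l' < k)%nat -> l <> l' ->
        exists d, (d < D)%nat /\ theta l d <> theta l' d) ->
    (exists l, (l < k)%nat /\ c l <> C0) ->
    Cpos (sumC k (fun l => sumC k (fun l' =>
            Cmul (Cmul (Cconj (c l)) (c l'))
                 (Cofreal (phi (pnormp p D (vsub (theta l') (theta l)))))))).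
Proof.
  intros [[f [Hf0 [Hfd Hfs]]] Hcont] H0 Hlim Hp0 Hp1 HD k theta c _ Hdist [l [Hl Hcl]].
  assert (Hp : 0 < p <= 1) by lra.
  change (Cpos (hermitian_form k (fun i j => phi (pdist p D theta i j)) c)). split.
  - apply hermitian_form_im. intros i j _ _. unfold pdist. now rewrite pnormp_vsub_sym.
  - pose proof (phi_form_nonneg phi f p D k theta Hf0 Hfd Hfs Hcont Hp HD) as Hnonneg.
    pose proof (phi_form_pos phi f p D k theta Hf0 Hfd Hfs Hcont Hp HD H0 Hlim Hdist) as Hpos.
    rewrite hermitian_form_re.
    pose proof (Hnonneg (fun l => re (c l))). pose proof (Hnonneg (fun l => im (c l))).
    destruct (Cplx_neq_0 (c l) Hcl) as [Hc|Hc];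
      [ pose proof (Hpos (fun l => re (c l)) ltac:(now exists l))
      | pose proof (Hpos (fun l => im (c l)) ltac:(now exists l)) ];
      lra.
Qed.
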